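(* For every instance, the infima over valid stochastic schedules satisfy $$\inf_\sigma \mathrm{EMP}[\sigma]=\inf_\sigma\mathrm{MEP}[\sigma]=\inf_\sigma\mathrm{EEP}[\sigma]\qquad\text{and}\qquad \inf_\sigma\mathrm{WMP}[\sigma]=\inf_\sigma\mathrm{MWP}[\sigma]=\inf_\sigma\mathrm{WEP}[\sigma].$$
   Context: An instance consists of a finite set $E$ of $n$ elements with nonnegative weights $(p_e)_{e\in E}$, and $m$ tests; test $i\in[m]$ is a subset $s_i\subseteq E$. A schedule is an infinite sequence $\sigma_1,\sigma_2,\dots\in[m]$ of tests. A stochastic schedule generates the sequence randomly, the distribution of $\sigma_t$ possibly depending on $\sigma_1,\dots,\sigma_{t-1}$ (deterministic schedules are a special case). The detection time of element $e$ at time $t\ge 1$ is $T(e,t)=\mathbb{E}\big[1+\min\{h\ge 0: e\in s_{\sigma_{t+h}}\}\big]$. Let $M_t[e]=\sup_{t\ge1}T(e,t)$ and $E_t[e]=\lim_{H\to\infty}\frac1H\sum_{t=1}^H T(e,t)$. A schedule is valid if for every $e$, $M_t[e]$ is finite and $E_t[e]$ exists, and for every test $i$ the limit $\lim_{H\to\infty}\frac1H\sum_{t=1}^H\Pr[\sigma_t=i]$ exists. Objectives: $\mathrm{EMP}=\sum_e p_e M_t[e]$, $\mathrm{MEP}=\sup_t\sum_e p_eT(e,t)$, $\mathrm{EEP}=\sum_e p_eE_t[e]$, $\mathrm{WMP}=\sup_{e,t}p_eT(e,t)$, $\mathrm{WEP}=\max_e p_eE_t[e]$, $\mathrm{MWP}=\lim_{H\to\infty}\frac1H\sum_{t=1}^H\max_e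 p_eT(e,t)$. Infima are over valid stochastic schedules. *)

From HB Require Import structures.
From mathcomp Require Import all_boot all_order all_algebra.
From mathcomp Require Import all_classical all_reals all_analysis.
Set Implicit Arguments. Unset Strict Implicit. Unset Printing Implicit Defensive.
Import Order.TTheory GRing.Theory Num.Theory numFieldNormedType.Exports.
Local Open Scope classical_set_scope.
Local Open Scope ring_scope.

(* Elements are 'I_n, tests are 'I_m, test i is the set s i : {set 'I_n},
   weights p : 'I_n -> R.  Times are 0-indexed internally: internal time t
   corresponds to time t+1 of the paper.

   A stochastic schedule is given by its conditional laws: K h is the
   distribution of the next test given the history h (the tests chosen so far). *)
Definition kernel (R : realType) (m : nat) := seq 'I_m -> 'I_m -> R.

Definition is_kernel (R : realType) (m : nat) (K : kernel R m) : Prop :=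
  (forall h i, 0 <= K h i) /\ (forall h, \sum_(i < m) K h i = 1).

Definition prob_hist (R : realType) (m : nat) (K : kernel R m) (L : nat)
  (w : L.-tuple 'I_m) : R :=
  \prod_(i < L) K (take i w) (tnth w i).

(* Pr[ e is not in s_{sigma_{t+1}}, ..., s_{sigma_{t+k}} ]  (paper times t+1..t+k) *)
Definition miss_prob (R : realType) (n m : nat) (s : 'I_m -> {set 'I_n})
  (K : kernel R m) (e : 'I_n) (t k : nat) : R :=
  \sum_(w : (t + k).-tuple 'I_m)
     prob_hist K w *
     (if [forall j : 'I_(t + k), (t <= j)%N ==> (e \notin s (tnth w j))]
      then 1 else 0).

(* Detection time T(e, t+1) = E[1 + H] = sum_{k>=0} Pr[1 + H > k]
   (tail-sum formula for the expectation of a N u {oo}-valued variable). *)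
Definition Tdet (R : realType) (n m : nat) (s : 'I_m -> {set 'I_n})
  (K : kernel R m) (e : 'I_n) (t : nat) : \bar R :=
  (\sum_(k <oo) (miss_prob s K e t k)%:E)%E.

Definition test_prob (R : realType) (m : nat) (K : kernel R m) (i : 'I_m)
  (t : nat) : R :=
  \sum_(w : t.+1.-tuple 'I_m) prob_hist K w * (if tnth w ord_max == i then 1 else 0).

(* (1/H) sum_{t=1}^{H} u_t, indexed by H.+1 to avoid H = 0 *)
Definition cesaro (R : realType) (u : nat -> R) (H : nat) : R :=
  (\sum_(t < H.+1) u t) / H.+1%:R.

Definition Mt (R : realType) (n m : nat) (s : 'I_m -> {set 'I_n})
  (K : kernel R m) (e : 'I_n) : \bar R :=
  ereal_sup (range (Tdet s K e)).

Definition Et (R : realType) (n m : nat) (s : 'I_m -> {set 'I_n})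
  (K : kernel R m) (e : 'I_n) : R :=
  limn (cesaro (fun t => fine (Tdet s K e t))).

Definition valid (R : realType) (n m : nat) (s : 'I_m -> {set 'I_n})
  (K : kernel R m) : Prop :=
  [/\ is_kernel K,
      forall e, (Mt s K e < +oo)%E,
      forall e, cvgn (cesaro (fun t => fine (Tdet s K e t)))
    & forall i, cvgn (cesaro (test_prob K i))].

Section objectives.
Variables (R : realType) (n m : nat) (p : 'I_n -> R) (s : 'I_m -> {set 'I_n}).

Definition EMP (K : kernel R m) : \bar R :=
  (\sum_(e < n) (p e)%:E * Mt s K e)%E.
Definition MEP (K : kernel R m) : \bar R :=
  ereal_sup (range (fun t => \sum_(e < n) (p e)%:E * Tdet s K e t)%E).
Definition EEP (K : kernel R m) : \bar R :=
  (\sum_(e < n) p e * Et s K e)%:E.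
Definition WMP (K : kernel R m) : \bar R :=
  ereal_sup (range (fun et : 'I_n * nat => (p et.1)%:E * Tdet s K et.1 et.2)%E).
Definition WEP (K : kernel R m) : \bar R :=
  (\big[Num.max/0]_(e < n) (p e * Et s K e))%:E.
(* max over e of nonnegative quantities; base 0 is harmless since n > 0 *)
Definition MWP (K : kernel R m) : \bar R :=
  limn_esup (fun H => (cesaro (fun t => fine (\big[maxe/0%E]_(e < n)
                              ((p e)%:E * Tdet s K e t)%E)) H)%:E).

Definition inf_obj (F : kernel R m -> \bar R) : \bar R :=
  ereal_inf [set F K | K in valid s].
End objectives.

From Pilot Require Import Defs.
From HB Require Import structures.
From mathcomp Require Import all_boot all_order all_algebra.
From mathcomp Require Import all_classical all_reals all_analysis.
From mathcomp Require Import zify ring lra.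
Set Implicit Arguments. Unset Strict Implicit. Unset Printing Implicit Defensive.
Import Order.TTheory GRing.Theory Num.Theory numFieldNormedType.Exports.
Local Open Scope ring_scope.
Local Open Scope classical_set_scope.

(* For every schedule, averages are bounded by suprema: EEP <= MEP <= EMP and
   WEP <= MWP <= WMP.  Conversely, a valid schedule K can be replaced at small
   cost by a stationary one: run K for H steps, restart it independently, and
   so on, starting the whole process at a uniformly random phase in [0, H).
   The law of each window of this schedule does not depend on its starting
   time, so its detection times are constant and M_t = E_t.  A detection from
   phase phi either happens before the next restart, with expected time at most
   T_K(e, phi), or is delayed by a restart; by Markov's inequality (M bounds all
   detection times of K) this happens with probability at most M / (H - phi),
   and it then costs at most a geometric series of blocks.  Averaging over phi,
   the detection time is at most the Cesaro mean of T_K(e, .) up to H, which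
   tends to E_t[e], plus an error that vanishes for suitable H.  Hence EMP and
   WMP can be brought within any eps of EEP and WEP. *)

Section TupleSums.
Variables (R : realType) (m : nat).
Local Notation T := 'I_m.

Definition tsum (k : nat) (f : seq T -> R) : R := \sum_(w : k.-tuple T) f w.

Lemma tsum0 f : tsum 0 f = f [::].
Proof.
rewrite /tsum (eq_bigr (fun _ => f [::])); last by move=> w _; rewrite tuple0.
by rewrite sumr_const card_tuple expn0.
Qed.

Lemma tsum_cons k f : tsum k.+1 f = \sum_(x : T) tsum k (fun w => f (x :: w)).
Proof.
rewrite /tsum pair_bigA /=.
rewrite (reindex (fun p : T * k.-tuple T => [tuple of p.1 :: p.2])) //=.
exists (fun t : k.+1.-tuple T => (thead t, [tuple of behead t])).
  by move=> [x w] _ /=; congr pair; apply/val_inj.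
by move=> t _; apply/val_inj => /=; rewrite [in RHS](tuple_eta t).
Qed.

Lemma tsum_cat a b f :
  tsum (a + b) f = tsum a (fun u => tsum b (fun v => f (u ++ v))).
Proof.
elim: a f => [|a IH] f; first by rewrite add0n tsum0.
by rewrite addSn !tsum_cons; apply: eq_bigr => x _; exact: IH.
Qed.

Lemma tsum_rcons k f : tsum k.+1 f = tsum k (fun u => \sum_(x : T) f (rcons u x)).
Proof.
rewrite -addn1 tsum_cat; apply: eq_bigr => u _.
by rewrite tsum_cons; apply: eq_bigr => x _; rewrite tsum0 cats1.
Qed.

Lemma eq_tsum k f g : (forall w, size w = k -> f w = g w) -> tsum k f = tsum k g.
Proof. by move=> fg; apply: eq_bigr => w _; apply: fg; rewrite size_tuple. Qed.

Lemma ler_tsum k f g : (forall w, size w = k -> f w <= g w) -> tsum k f <= tsum k g.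
Proof. by move=> fg; apply: ler_sum => w _; apply: fg; rewrite size_tuple. Qed.

Lemma tsum_ge0 k f : (forall w, size w = k -> 0 <= f w) -> 0 <= tsum k f.
Proof. by move=> f0; apply: sumr_ge0 => w _; apply: f0; rewrite size_tuple. Qed.

Lemma tsumZl k c f : tsum k (fun w => c * f w) = c * tsum k f.
Proof. by rewrite /tsum mulr_sumr. Qed.

Lemma tsumZr k c f : tsum k (fun w => f w * c) = tsum k f * c.
Proof. by rewrite /tsum mulr_suml. Qed.

Lemma tsum_sum k (I : finType) (F : I -> seq T -> R) :
  tsum k (fun w => \sum_i F i w) = \sum_i tsum k (F i).
Proof. by rewrite /tsum exchange_big. Qed.

End TupleSums.

(* A stochastic schedule is described equivalently by the probabilities [P u]
   of its finite histories [u]; these are the prefix measures below. *)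
Section PrefixMeasures.
Variables (R : realType) (m : nat) (x0 : 'I_m).
Local Notation T := 'I_m.

Definition prefix_measure (P : seq T -> R) :=
  [/\ P [::] = 1, (forall u, \sum_(x : T) P (rcons u x) = P u) & (forall u, 0 <= P u)].

Lemma prefix_measure_marginal P u k :
  prefix_measure P -> tsum k (fun v => P (u ++ v)) = P u.
Proof.
move=> [_ Pr _]; elim: k => [|k IH]; first by rewrite tsum0 cats0.
rewrite tsum_rcons -[RHS]IH; apply: eq_tsum => v _.
by under eq_bigr do rewrite -rcons_cat; rewrite Pr.
Qed.

Lemma prefix_measure_total P k : prefix_measure P -> tsum k P = 1.
Proof. by move=> hP; have := prefix_measure_marginal [::] k hP; case: hP => -> _ _. Qed.

Definition window_mean (P : seq T -> R) (a k : nat) (f : seq T -> R) : R :=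
  tsum (a + k) (fun u => P u * f (drop a u)).

Lemma window_mean_ge0 P a k f :
  prefix_measure P -> (forall u, 0 <= f u) -> 0 <= window_mean P a k f.
Proof. by move=> [_ _ P0] f0; apply: tsum_ge0 => u _; rewrite mulr_ge0. Qed.

Definition hist_prob (K : Defs.kernel R m) (u : seq T) : R :=
  \prod_(0 <= i < size u) K (take i u) (nth x0 u i).

Lemma prob_histE K L (w : L.-tuple T) : prob_hist K w = hist_prob K w.
Proof.
rewrite /prob_hist /hist_prob size_tuple big_mkord; apply: eq_bigr => i _.
by rewrite (tnth_nth x0).
Qed.

Lemma hist_prob_rcons K u x : hist_prob K (rcons u x) = hist_prob K u * K u x.
Proof.
rewrite /hist_prob size_rcons big_nat_recr //=; congr (_ * _).
  apply: eq_big_nat => i /andP[_ hi].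
  by rewrite nth_rcons hi -cats1 takel_cat // ltnW.
by rewrite nth_rcons ltnn eqxx -cats1 take_size_cat.
Qed.

Lemma hist_prob_prefix_measure K : is_kernel K -> prefix_measure (hist_prob K).
Proof.
move=> [K0 K1]; split.
- by rewrite /hist_prob big_nil.
- by move=> u; under eq_bigr do rewrite hist_prob_rcons; rewrite -mulr_sumr K1 mulr1.
- by move=> u; apply: prodr_ge0 => i _; apply: K0.
Qed.

(* After a history of probability 0 the next test is arbitrary (here [x0]). *)
Definition kernel_of (P : seq T -> R) : Defs.kernel R m :=
  fun h i => if P h == 0 then (i == x0)%:R else P (rcons h i) / P h.

Lemma kernel_of_is_kernel P : prefix_measure P -> is_kernel (kernel_of P).
Proof.
move=> [_ Pr P0]; split.
- move=> h i; rewrite /kernel_of; case: eqP => _; first by rewrite ler0n.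
  by rewrite divr_ge0.
- move=> h; rewrite /kernel_of; case: eqP => [_|hn].
    by rewrite (bigD1 x0) //= eqxx big1 ?addr0 // => i /negbTE ->.
  by rewrite -mulr_suml Pr divff //; apply/eqP.
Qed.

Lemma hist_prob_kernel_of P : prefix_measure P -> hist_prob (kernel_of P) =1 P.
Proof.
move=> [P1 Pr P0]; elim/last_ind => [|u x IH]; first by rewrite /hist_prob big_nil P1.
rewrite hist_prob_rcons IH /kernel_of; case: eqP => [Pu0|Pu_neq0]; last first.
  by rewrite mulrC divfK //; apply/eqP.
rewrite Pu0 mul0r; apply/esym/eqP; move: (Pr u); rewrite Pu0 => /eqP.
rewrite psumr_eq0 => [/allP/(_ x)|i _ //].
by rewrite mem_index_enum => /(_ isT) /implyP /(_ isT).
Qed.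

End PrefixMeasures.

Lemma drop_catl (T : Type) r (u v : seq T) :
  (r <= size u)%N -> drop r (u ++ v) = drop r u ++ v.
Proof.
move=> hr; rewrite drop_cat; case: ltnP => h //.
have -> : r = size u by apply/eqP; rewrite eqn_leq hr h.
by rewrite subnn drop0 drop_size.
Qed.

(* [restart H P]: run [P] for [H] steps, then restart it from scratch, and so on.
   [phase_mix H P]: the same with a uniformly random phase in [0, H), which makes
   the law of every window independent of its starting time. *)
Section Restart.
Variables (R : realType) (m H : nat) (P : seq 'I_m -> R).
Hypothesis H_gt0 : (0 < H)%N.
Hypothesis Pm : prefix_measure P.
Local Notation T := 'I_m.

Fixpoint restart_fuel (fuel : nat) (u : seq T) : R :=
  if fuel is fuel'.+1 then
    if (size u <= H)%N then P u else P (take H u) * restart_fuel fuel' (drop H u)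
  else P u.

Definition restart (u : seq T) : R := restart_fuel (size u) u.

Lemma restart_fuel_enough f1 f2 u : (size u <= f1)%N -> (size u <= f2)%N ->
  restart_fuel f1 u = restart_fuel f2 u.
Proof.
elim: f1 f2 u => [|f1 IH] [|f2] u h1 h2 //=.
- by move: h1; rewrite leqn0 => /nilP ->.
- by move: h2; rewrite leqn0 => /nilP ->.
- case: ifP => // hs; congr (_ * _); apply: IH; rewrite size_drop.
    by move: h1 H_gt0; rewrite leq_subLR; lia.
  by move: h2 H_gt0; rewrite leq_subLR; lia.
Qed.

Lemma restartE u :
  restart u = if (size u <= H)%N then P u else P (take H u) * restart (drop H u).
Proof.
rewrite /restart (@restart_fuel_enough (size u) (size u).+1) //=; case: ifP => // _.
by congr (_ * _); apply: restart_fuel_enough => //; rewrite size_drop leq_subr.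
Qed.

Lemma restart_small u : (size u <= H)%N -> restart u = P u.
Proof. by move=> h; rewrite restartE h. Qed.

Lemma restart_cat B w : size B = H -> restart (B ++ w) = P B * restart w.
Proof.
move=> hB; have [P1 _ _] := Pm.
rewrite restartE size_cat hB; case: ifP => [h|_].
  have -> : w = [::] by apply/nilP; rewrite /nilp; move: h; lia.
  by rewrite cats0 restart_small // P1 mulr1.
by rewrite -hB take_size_cat // drop_size_cat.
Qed.

Lemma restart_ge0 u : 0 <= restart u.
Proof.
have [_ _ P0] := Pm; rewrite /restart; move: (size u) => f.
by elim: f u => [|f IH] u /=; last case: ifP => _; rewrite ?mulr_ge0.
Qed.

Lemma restart_rcons u : \sum_(x : T) restart (rcons u x) = restart u.
Proof.
have [_ Pr _] := Pm.
move: {2}(size u) (leqnn (size u)) => k; elim: k u => [|k IH] u hu.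
  move: hu; rewrite leqn0 => /nilP ->; rewrite restart_small //.
  by under eq_bigr do rewrite restart_small //; rewrite Pr.
case: (ltnP (size u) H) => h.
  rewrite restart_small ?(ltnW h) //.
  by under eq_bigr do rewrite restart_small // ?size_rcons //; rewrite Pr.
have hB : size (take H u) = H by rewrite size_take_min (minn_idPl h).
rewrite -(cat_take_drop H u) restart_cat //.
under eq_bigr do rewrite rcons_cat restart_cat //.
by rewrite -mulr_sumr IH // size_drop; move: H_gt0 hu; lia.
Qed.

Lemma restart_prefix_measure : prefix_measure restart.
Proof.
have [P1 _ _] := Pm; split; [by rewrite restart_small | exact: restart_rcons |].
exact: restart_ge0.
Qed.

Definition phase_mix (w : seq T) : R :=
  H%:R^-1 * \sum_(phi < H) tsum phi (fun v => restart (v ++ w)).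

Lemma phase_mix_prefix_measure : prefix_measure phase_mix.
Proof.
have Rm := restart_prefix_measure; split.
- rewrite /phase_mix (eq_bigr (fun _ => 1)); last first.
    by move=> i _; under eq_tsum do rewrite cats0; rewrite prefix_measure_total.
  by rewrite sumr_const card_ord mulVf // pnatr_eq0 -lt0n.
- move=> u; rewrite /phase_mix -mulr_sumr; congr (_ * _).
  rewrite exchange_big; apply: eq_bigr => phi _.
  rewrite -tsum_sum; apply: eq_tsum => v _.
  by under eq_bigr do rewrite -rcons_cat; rewrite restart_rcons.
- move=> u; rewrite /phase_mix mulr_ge0 ?invr_ge0 ?ler0n //.
  by apply: sumr_ge0 => i _; apply: tsum_ge0 => v _; apply: restart_ge0.
Qed.

Lemma window_mean_phase_mix t k f :
  window_mean phase_mix t k f = H%:R^-1 * \sum_(phi < H) window_mean restart (phi + t) k f.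
Proof.
rewrite /window_mean /phase_mix.
under eq_tsum do rewrite -mulrA mulr_suml.
rewrite tsumZl tsum_sum; congr (_ * _); apply: eq_bigr => phi _.
rewrite -addnA [in RHS]tsum_cat /tsum exchange_big; apply: eq_bigr => v _.
rewrite mulr_suml; apply: eq_bigr => w _.
by rewrite drop_cat size_tuple ltnNge leq_addr /= addKn.
Qed.

Lemma window_mean_restart_periodic a k f :
  window_mean restart (H + a) k f = window_mean restart a k f.
Proof.
rewrite /window_mean -addnA tsum_cat.
under eq_tsum => u hu.
  under eq_tsum => v _ do
    rewrite restart_cat // drop_cat hu ltnNge leq_addr /= addKn -mulrA.
  rewrite tsumZl.
over.
by rewrite /= tsumZr prefix_measure_total ?mul1r.
Qed.

Lemma sum_ord_shift_periodic (g : nat -> R) t : (forall a, g (H + a) = g a) ->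
  \sum_(phi < H) g (phi + t)%N = \sum_(phi < H) g phi.
Proof.
move=> gH; elim: t => [|t IH]; first by under eq_bigr do rewrite addn0.
rewrite -IH; move: gH; case: H H_gt0 => // H' _ gH.
rewrite big_ord_recr big_ord_recl /= addrC; congr (_ + _).
  by rewrite addnS -addSn gH.
by apply: eq_bigr => i _; rewrite addnS addSn.
Qed.

Lemma window_mean_phase_mix_stationary t k f :
  window_mean phase_mix t k f = window_mean phase_mix 0 k f.
Proof.
rewrite !window_mean_phase_mix; congr (_ * _).
rewrite (@sum_ord_shift_periodic (fun a => window_mean restart a k f) t).
  by under [RHS]eq_bigr do rewrite addn0.
by move=> a; exact: window_mean_restart_periodic.
Qed.

Lemma window_mean_restart_small r k f :
  (r + k <= H)%N -> window_mean restart r k f = window_mean P r k f.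
Proof. by move=> h; apply: eq_tsum => w hw; rewrite restart_small // hw. Qed.

Lemma window_mean_restart_split r k f : (r <= H <= r + k)%N ->
  (forall u v, f (u ++ v) = f u * f v) ->
  window_mean restart r k f = window_mean P r (H - r) f * window_mean restart 0 (r + k - H) f.
Proof.
move=> /andP[h1 h2] fM; rewrite /window_mean subnKC // add0n.
have -> : (r + k = H + (r + k - H))%N by rewrite subnKC.
rewrite tsum_cat.
under eq_tsum => u hu.
  under eq_tsum => v _.
    rewrite restart_cat // drop_catl ?hu // fM.
    rewrite (_ : _ * _ = (P u * f (drop r u)) * (restart v * f v)); last by ring.
  over.
  rewrite tsumZl.
over.
by rewrite /= tsumZr addKn; congr (_ * _); apply: eq_tsum => v _; rewrite drop0.
Qed.

End Restart.

Section Detection.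
Variables (R : realType) (n m : nat) (x0 : 'I_m) (s : 'I_m -> {set 'I_n}).
Local Notation T := 'I_m.

Definition avoids (e : 'I_n) (u : seq T) : R := (all (fun x => e \notin s x) u)%:R.

Lemma avoids_cat e u v : avoids e (u ++ v) = avoids e u * avoids e v.
Proof. by rewrite /avoids all_cat; case: (all _ u); case: (all _ v); rewrite ?mulr1 ?mulr0. Qed.

Lemma avoids_ge0 e u : 0 <= avoids e u.
Proof. exact: ler0n. Qed.

Lemma forall_tnth_drop e t k (w : (t + k).-tuple T) :
  [forall j : 'I_(t + k), (t <= j)%N ==> (e \notin s (tnth w j))] =
  all (fun x => e \notin s x) (drop t w).
Proof.
apply/forallP/(all_nthP x0) => [Hw i hi|Hw j].
  rewrite size_drop size_tuple in hi.
  have hj : (t + i < t + k)%N by move: hi; lia.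
  by move: (Hw (Ordinal hj)); rewrite /= leq_addr /= (tnth_nth x0) nth_drop.
apply/implyP => hj; rewrite (tnth_nth x0).
have := Hw (j - t)%N; rewrite size_drop size_tuple nth_drop subnKC //.
by apply; move: (ltn_ord j) hj; lia.
Qed.

Lemma miss_probE (K : Defs.kernel R m) e t k :
  miss_prob s K e t k = window_mean (hist_prob x0 K) t k (avoids e).
Proof.
rewrite /miss_prob /window_mean /tsum; apply: eq_bigr => w _.
by rewrite (prob_histE x0) forall_tnth_drop /avoids; case: (all _ _).
Qed.

Lemma TdetE (K : Defs.kernel R m) e t :
  Tdet s K e t = (\sum_(k <oo) (window_mean (hist_prob x0 K) t k (avoids e))%:E)%E.
Proof. by rewrite /Tdet; under eq_eseriesr do rewrite miss_probE. Qed.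

Lemma test_probE (K : Defs.kernel R m) i t :
  test_prob K i t = window_mean (hist_prob x0 K) t 1 (fun u => (nth x0 u 0 == i)%:R).
Proof.
rewrite /test_prob /window_mean addn1 /tsum; apply: eq_bigr => w _.
by rewrite (prob_histE x0) nth_drop addn0 (tnth_nth x0) /=; case: (_ == _).
Qed.

Variable P : seq T -> R.
Hypothesis Pm : prefix_measure P.
Local Notation miss t k e := (window_mean P t k (avoids e)).

Lemma window_mean0 t f : window_mean P t 0 f = f [::].
Proof.
rewrite /window_mean; under eq_tsum => w hw do rewrite drop_oversize ?hw ?addn0 //.
by rewrite tsumZr addn0 prefix_measure_total // mul1r.
Qed.

Lemma miss_ge0 e t k : 0 <= miss t k e.
Proof. by apply: window_mean_ge0 => // u; exact: avoids_ge0. Qed.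

Lemma miss_le_pred e t k : miss t k.+1 e <= miss t k e.
Proof.
have [_ Pr P0] := Pm.
rewrite /window_mean addnS tsum_rcons; apply: ler_tsum => u hu.
rewrite -[X in _ <= X * _]Pr mulr_suml; apply: ler_sum => x _.
apply: ler_wpM2l; first exact: P0.
rewrite -cats1 drop_catl ?hu ?leq_addr // /avoids all_cat /= andbT.
by case: (all _ (drop t u)); case: (e \notin s x).
Qed.

Lemma miss_le e t j k : (j <= k)%N -> miss t k e <= miss t j e.
Proof.
elim: k => [|k IH]; first by rewrite leqn0 => /eqP ->.
rewrite leq_eqVlt => /orP[/eqP -> //|hj].
exact: le_trans (miss_le_pred _ _ _) (IH hj).
Qed.

Lemma miss_le1 e t k : miss t k e <= 1.
Proof. by apply: le_trans (miss_le e t (leq0n k)) _; rewrite window_mean0 /avoids. Qed.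

Lemma miss_markov e t k : k%:R * miss t k e <= \sum_(j < k) miss t j e.
Proof.
rewrite mulr_natl -[X in _ *+ X]card_ord -sumr_const; apply: ler_sum => j _.
exact/miss_le/ltnW.
Qed.

End Detection.
Arguments avoids {R n m} s e u.

Lemma ler_sum_ord_widen (R : realType) (u : nat -> R) N M : (forall k, 0 <= u k) ->
  (N <= M)%N -> \sum_(k < N) u k <= \sum_(k < M) u k.
Proof.
move=> u0 NM; rewrite -(subnKC NM) big_split_ord /= lerDl.
by apply: sumr_ge0 => i _; exact: u0.
Qed.

Section RestartMissSums.
Variables (R : realType) (n m H : nat) (s : 'I_m -> {set 'I_n}) (P : seq 'I_m -> R).
Variable e : 'I_n.
Hypothesis H_gt0 : (0 < H)%N.
Hypothesis Pm : prefix_measure P.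
Local Notation missP t k := (window_mean P t k (avoids s e)).
Local Notation missR t k := (window_mean (restart H P) t k (avoids s e)).

Hypothesis missP_lt1 : missP 0 H < 1.
Let S0 := \sum_(k < H) missP 0 k.
Let C := S0 / (1 - missP 0 H).

Lemma S0_le_C : S0 <= C.
Proof.
have S0_ge0 : 0 <= S0 by apply: sumr_ge0 => k _; apply: miss_ge0.
rewrite /C ler_pdivlMr ?subr_gt0 // ler_piMr // lerBlDr lerDl.
exact: miss_ge0.
Qed.

(* Every block of [H] steps after a restart repeats the first one, so the
   partial sums are dominated by a geometric series of ratio [missP 0 H]. *)
Lemma restart_miss_sum_le N : \sum_(k < N) missR 0 k <= C.
Proof.
elim/ltn_ind: N => N IH.
have missP_ge0 k : 0 <= missP 0 k by apply: miss_ge0.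
case: (leqP N H) => hN.
  apply: le_trans S0_le_C; rewrite /S0.
  rewrite (eq_bigr (fun k : 'I_N => missP 0 k)); last first.
    by move=> k _; apply: window_mean_restart_small; move: (ltn_ord k) hN; lia.
  exact: (@ler_sum_ord_widen _ (fun k => missP 0 k)).
rewrite -(subnKC (ltnW hN)) big_split_ord /=.
rewrite (eq_bigr (fun k : 'I_H => missP 0 k)); last first.
  by move=> k _; apply: window_mean_restart_small; move: (ltn_ord k); lia.
rewrite (eq_bigr (fun k : 'I_(N - H) => missP 0 H * missR 0 k)); last first.
  move=> k _; rewrite window_mean_restart_split ?leq_addr //; last exact: avoids_cat.
  by rewrite subn0 add0n addKn.
rewrite -mulr_sumr -/S0.
have IHN : \sum_(i < N - H) missR 0 i <= C.
  by apply: IH; rewrite ltn_subrL H_gt0; move: hN; lia.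
apply: le_trans (lerD (lexx S0) (ler_wpM2l (missP_ge0 H) IHN)) _.
have hd : 0 < 1 - missP 0 H by rewrite subr_gt0.
by rewrite /C le_eqVlt; apply/orP; left; apply/eqP; field; rewrite gt_eqF.
Qed.

Lemma restart_phase_miss_sum_le r N : (r < H)%N ->
  \sum_(k < N) missR r k <= \sum_(k < H - r) missP r k + missP r (H - r) * C.
Proof.
move=> hr.
have missP_ge0 k : 0 <= missP r k by apply: miss_ge0.
have C_ge0 : 0 <= C.
  by apply: le_trans S0_le_C; apply: sumr_ge0 => k _; apply: miss_ge0.
case: (leqP N (H - r)) => hN.
  rewrite (eq_bigr (fun k : 'I_N => missP r k)); last first.
    by move=> k _; apply: window_mean_restart_small; move: (ltn_ord k) hN hr; lia.
  rewrite -[X in X <= _]addr0; apply: lerD; last exact: mulr_ge0.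
  exact: (@ler_sum_ord_widen _ (fun k => missP r k)).
rewrite -(subnKC (ltnW hN)) big_split_ord /=.
rewrite (eq_bigr (fun k : 'I_(H - r) => missP r k)); last first.
  by move=> k _; apply: window_mean_restart_small; move: (ltn_ord k) hr; lia.
apply: lerD => //.
rewrite (eq_bigr (fun k : 'I_(N - (H - r)) => missP r (H - r) * missR 0 k)); last first.
  move=> k _; rewrite window_mean_restart_split //; last exact: avoids_cat.
    by congr (_ * _); congr window_mean; move: hr; lia.
  by apply/andP; split; [exact: ltnW | move: hr; lia].
by rewrite -mulr_sumr; apply: ler_wpM2l => //; apply: restart_miss_sum_le.
Qed.

End RestartMissSums.

(* A bound [D phi] on the partial sums of miss probabilities from phase [phi],
   i.e. on the detection time from [phi], is used twice: through Markov's
   inequality it makes restarts rare, and it controls the mass of the series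
   before the first restart. *)
Section MissSumBound.
Variables (R : realType) (n m : nat) (s : 'I_m -> {set 'I_n}) (P : seq 'I_m -> R).
Variables (e : 'I_n) (D : nat -> R) (M : R).
Hypothesis Pm : prefix_measure P.
Local Notation missP t k := (window_mean P t k (avoids s e)).
Hypothesis missP_sum_le : forall phi N, \sum_(k < N) missP phi k <= D phi.
Hypothesis D_le : forall phi, D phi <= M.

Lemma missP_bound_ge0 : 0 <= M.
Proof. by apply: le_trans (le_trans (missP_sum_le 0 0) (D_le 0)); rewrite big_ord0. Qed.

Lemma missP_le_div phi k : (0 < k)%N -> missP phi k <= M / k%:R.
Proof.
move=> k_gt0; rewrite ler_pdivlMr ?ltr0n // mulrC.
exact: le_trans (miss_markov s Pm e phi k) (le_trans (missP_sum_le phi k) (D_le phi)).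
Qed.

(* The last [L] phases are charged [1] each; the others see at least [L] steps
   before the restart. *)
Lemma miss_before_restart_sum_le Nn L : (0 < L)%N ->
  \sum_(phi < Nn + L) missP phi (Nn + L - phi) <= Nn%:R * (M / L%:R) + L%:R.
Proof.
move=> L_gt0; rewrite big_split_ord /=; apply: lerD.
  rewrite mulr_natl -[X in _ *+ X]card_ord -sumr_const; apply: ler_sum => phi _.
  apply: le_trans (missP_le_div phi L_gt0).
  by apply: miss_le => //; move: (ltn_ord phi); lia.
rewrite -[X in X%:R]card_ord -sumr_const.
by apply: ler_sum => i _; apply: miss_le1.
Qed.

Variable H : nat.
Hypothesis H_gt0 : (0 < H)%N.
Hypothesis M_le_H : 2 * M <= H%:R.

Lemma missP_block_le_half : missP 0 H <= 2^-1.
Proof.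
apply: le_trans (missP_le_div 0 H_gt0) _.
by rewrite ler_pdivrMr ?ltr0n //; move: M_le_H; lra.
Qed.

Lemma restart_geometric_factor_le :
  (\sum_(k < H) missP 0 k) / (1 - missP 0 H) <= 2 * M.
Proof.
have h := missP_block_le_half; have M0 := missP_bound_ge0.
rewrite ler_pdivrMr; last by move: h; lra.
apply: le_trans (le_trans (missP_sum_le 0 H) (D_le 0)) _; nra.
Qed.

Lemma phase_mix_miss_sum_le N :
  \sum_(k < N) window_mean (phase_mix H P) 0 k (avoids s e) <=
  H%:R^-1 * \sum_(phi < H) D phi +
  H%:R^-1 * (2 * M) * \sum_(phi < H) missP phi (H - phi).
Proof.
have missP_lt1 : missP 0 H < 1.
  by apply: le_lt_trans missP_block_le_half _; rewrite invf_lt1 // ltr1n.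
under eq_bigr do rewrite window_mean_phase_mix.
rewrite -mulr_sumr exchange_big -mulrA -mulrDr.
apply: ler_wpM2l; first by rewrite invr_ge0 ler0n.
rewrite mulr_sumr -big_split; apply: ler_sum => phi _.
under eq_bigr do rewrite addn0.
apply: le_trans (restart_phase_miss_sum_le H_gt0 Pm missP_lt1 N (ltn_ord phi)) _.
apply: lerD; first exact: missP_sum_le.
rewrite [X in _ <= X]mulrC; apply: ler_wpM2l; first exact: miss_ge0.
exact: restart_geometric_factor_le.
Qed.

End MissSumBound.

Lemma nat_gt_exists (R : realType) (x : R) N : exists k : nat, (N < k)%N /\ x < k%:R.
Proof.
exists (Num.truncn x + N).+1; split; first by rewrite ltnS leq_addl.
by apply: lt_le_trans (truncnS_gt x) _; rewrite ler_nat ltnS leq_addr.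
Qed.

(* [L > 4 M^2 / eps] and [Nn > 4 M L / eps] bound the error by
   [2 M^2 / L + 2 M L / Nn <= eps]. *)
Lemma restart_lengths_exist (R : realType) (M eps : R) N0 : 0 <= M -> 0 < eps ->
  exists Nn L : nat, [/\ (0 < L)%N, (N0 < Nn)%N, 2 * M <= Nn%:R &
    (Nn + L)%:R^-1 * (2 * M) * (Nn%:R * (M / L%:R) + L%:R) <= eps].
Proof.
move=> M0 eps_gt0.
have [L [L_gt0 hL]] := nat_gt_exists (4 * M ^+ 2 / eps) 0.
have [Nn [N0_lt hN]] := nat_gt_exists (4 * M * L%:R / eps + 2 * M) N0.
have L_gt0' : 0 < L%:R :> R by rewrite ltr0n.
have Nn_ge0 : 0 <= Nn%:R :> R by rewrite ler0n.
have x_ge0 : 0 <= 4 * M * L%:R / eps.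
  by apply: divr_ge0; [rewrite !mulr_ge0 ?ler0n | exact: ltW].
rewrite ltr_pdivrMr // in hL.
have hNM : 2 * M <= Nn%:R by move: hN x_ge0; lra.
have hNL : 4 * M * L%:R <= Nn%:R * eps.
  by rewrite -ler_pdivrMr //; move: hN M0; lra.
exists Nn, L; split => //.
rewrite natrD -mulrA ler_pdivrMl ?ltr_wpDl //.
have -> : Nn%:R * (M / L%:R) = Nn%:R * M / L%:R by rewrite mulrA.
rewrite mulrDr mulrA -mulrA [2 * M * _]mulrC.
have h1 : 2 * M * (Nn%:R * M / L%:R) <= Nn%:R * eps / 2.
  rewrite mulrA ler_pdivrMr //.
  have := ler_wpM2l Nn_ge0 (ltW hL); rewrite expr2; nra.
have := mulr_gt0 L_gt0' eps_gt0; nra.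
Qed.

Section NonnegSeries.
Variable R : realType.
Local Open Scope ereal_scope.

Lemma sum_le_nneseries (u : nat -> R) N : (forall k, 0 <= u k)%R ->
  (\sum_(k < N) u k)%:E <= \sum_(k <oo) (u k)%:E.
Proof.
move=> u0; rewrite -sumEFin -(big_mkord xpredT (fun k => (u k)%:E)).
by apply: nneseries_lim_ge => k _ _; rewrite lee_fin.
Qed.

Lemma nneseries_le (u : nat -> R) (B : R) : (forall k, 0 <= u k)%R ->
  (forall N, \sum_(k < N) u k <= B)%R -> \sum_(k <oo) (u k)%:E <= B%:E.
Proof.
move=> u0 uB; apply: lime_le; first by apply: is_cvg_nneseries => k _ _; rewrite lee_fin.
by apply: nearW => N; rewrite big_mkord sumEFin lee_fin.
Qed.

End NonnegSeries.

Lemma cvg_cesaro_const (R : realType) (u : nat -> R) :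
  (forall t, u t = u 0%N) -> cvgn (Defs.cesaro u).
Proof.
move=> uE; have -> : Defs.cesaro u = fun _ => u 0%N.
  apply: funext => N; rewrite /Defs.cesaro; under eq_bigr do rewrite uE.
  by rewrite sumr_const card_ord -[u 0%N *+ _]mulr_natr mulfK // pnatr_eq0.
exact: is_cvg_cst.
Qed.

Section ValidSchedules.
Variables (R : realType) (n m : nat) (s : 'I_m -> {set 'I_n}).
Implicit Types (K : Defs.kernel R m) (e : 'I_n).

Lemma valid_tests_gt0 K : valid s K -> (0 < m)%N.
Proof.
move=> [[_ K1] _ _ _]; case: m K K1 => // K K1.
by move: (K1 [::]); rewrite big_ord0 => /eqP; rewrite eq_sym oner_eq0.
Qed.

Lemma Tdet_ge0 K e t : is_kernel K -> (0 <= Tdet s K e t)%E.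
Proof.
move=> [K0 _]; apply: nneseries_ge0 => k _ _; rewrite lee_fin.
apply: sumr_ge0 => w _; apply: mulr_ge0; last by case: ifP.
by apply: prodr_ge0 => i _; apply: K0.
Qed.

Lemma Tdet_le_Mt K e t : (Tdet s K e t <= Mt s K e)%E.
Proof. by apply: ereal_sup_ubound; exists t. Qed.

Lemma Tdet_fin_num K e t : valid s K -> Tdet s K e t \is a fin_num.
Proof.
move=> [kK Mt_fin _ _]; rewrite ge0_fin_numE; last exact: Tdet_ge0.
exact: le_lt_trans (Tdet_le_Mt _ _ _) (Mt_fin e).
Qed.

Lemma valid_Tdet_bounded K : valid s K ->
  exists2 M : R, 0 <= M & forall e t, fine (Tdet s K e t) <= M.
Proof.
move=> hK; have [kK Mt_fin _ _] := hK.
have Mt_ge0 e : (0 <= Mt s K e)%E := le_trans (Tdet_ge0 e 0 kK) (Tdet_le_Mt K e 0).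
have fine_Mt_ge0 e : 0 <= fine (Mt s K e) by exact: fine_ge0.
exists (\sum_(e < n) fine (Mt s K e)) => [|e t]; first exact: sumr_ge0.
apply: le_trans (_ : fine (Mt s K e) <= _).
  apply: fine_le; [exact: Tdet_fin_num | | exact: Tdet_le_Mt].
  by rewrite ge0_fin_numE ?Mt_fin.
by rewrite (bigD1 e) //= lerDl; apply: sumr_ge0.
Qed.

Lemma miss_sum_le_Tdet K x0 e t N : valid s K ->
  \sum_(k < N) window_mean (hist_prob x0 K) t k (avoids s e) <= fine (Tdet s K e t).
Proof.
move=> hK; have [kK _ _ _] := hK.
rewrite -lee_fin fineK ?Tdet_fin_num // (TdetE x0); apply: sum_le_nneseries => k.
exact/miss_ge0/hist_prob_prefix_measure.
Qed.

Lemma cesaro_Tdet_eventually_le K eps : valid s K -> 0 < eps ->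
  exists N0, forall N, (N0 <= N)%N ->
    forall e, Defs.cesaro (fun t => fine (Tdet s K e t)) N <= Et s K e + eps.
Proof.
move=> [_ _ cvg_Et _] eps_gt0.
have : \forall N \near \oo, forall e,
    Defs.cesaro (fun t => fine (Tdet s K e t)) N <= Et s K e + eps.
  apply: filter_forall => e; have := cvg_Et e.
  move=> /cvgrPdist_le /(_ eps eps_gt0); apply: filterS => N /ler_normlP [h _].
  by rewrite /Et; lra.
by move=> [N0 _ hN0]; exists N0.
Qed.

Lemma valid_stationary K : is_kernel K ->
  (forall e t, Tdet s K e t = Tdet s K e 0) -> (forall e, (Tdet s K e 0 < +oo)%E) ->
  (forall i t, test_prob K i t = test_prob K i 0) -> valid s K.
Proof.
move=> kK Tdet_stat Tdet_fin test_stat; split => //.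
- move=> e; apply: le_lt_trans (Tdet_fin e).
  by apply: ge_ereal_sup => _ [t _ <-]; rewrite Tdet_stat.
- by move=> e; apply: cvg_cesaro_const => t; rewrite Tdet_stat.
- by move=> i; exact: cvg_cesaro_const.
Qed.

Lemma stationary_approximation K eps : valid s K -> 0 < eps ->
  exists K', valid s K' /\ forall e t, (Tdet s K' e t <= (Et s K e + eps)%:E)%E.
Proof.
move=> hK eps_gt0; have [kK _ _ _] := hK.
pose x0 := Ordinal (valid_tests_gt0 hK).
pose P := hist_prob x0 K; have Pm : prefix_measure P := hist_prob_prefix_measure x0 kK.
have [M M_ge0 TK_le] := valid_Tdet_bounded hK.
have eps2_gt0 : 0 < eps / 2 by rewrite divr_gt0.
have [N0 hN0] := cesaro_Tdet_eventually_le hK eps2_gt0.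
have [Nn [L [L_gt0 N0_lt M_le_Nn err_le]]] := restart_lengths_exist N0 M_ge0 eps2_gt0.
pose H := (Nn + L)%N; have H_gt0 : (0 < H)%N by rewrite addn_gt0 L_gt0 orbT.
have N0_le_H : (N0 <= H.-1)%N by rewrite /H; lia.
have M_le_H : 2 * M <= H%:R by apply: le_trans M_le_Nn _; rewrite ler_nat leq_addr.
pose K' := kernel_of x0 (phase_mix H P).
have Pmix := phase_mix_prefix_measure H_gt0 Pm.
have K'E : hist_prob x0 K' = phase_mix H P by apply/funext/hist_prob_kernel_of.
have Tdet_stat e t : Tdet s K' e t = Tdet s K' e 0.
  by rewrite !(TdetE x0) K'E; apply: eq_eseriesr => k _; rewrite window_mean_phase_mix_stationary.
have Tdet_le e : (Tdet s K' e 0 <= (Et s K e + eps)%:E)%E.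
  have missP_sum_le phi N := miss_sum_le_Tdet x0 e phi N hK.
  rewrite (TdetE x0) K'E.
  apply: le_trans (nneseries_le (fun k => miss_ge0 s Pmix e 0 k)
    (phase_mix_miss_sum_le Pm missP_sum_le (TK_le e) H_gt0 M_le_H)) _.
  have avg_le := hN0 H.-1 N0_le_H e.
  rewrite /Defs.cesaro prednK // mulrC in avg_le.
  have tail_le := miss_before_restart_sum_le Pm missP_sum_le (TK_le e) Nn L_gt0.
  rewrite lee_fin; apply: le_trans (lerD avg_le (le_trans (ler_wpM2l _ tail_le) err_le)) _.
    by rewrite mulr_ge0 ?invr_ge0 ?ler0n ?mulr_ge0.
  by lra.
exists K'; split; last by move=> e t; rewrite Tdet_stat.
apply: valid_stationary; first exact: kernel_of_is_kernel.
- exact: Tdet_stat.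
- by move=> e; apply: le_lt_trans (Tdet_le e) (ltry _).
- by move=> i t; rewrite !(test_probE x0) K'E window_mean_phase_mix_stationary.
Qed.

End ValidSchedules.

Lemma cesaro_le (R : realType) (u : nat -> R) v N :
  (forall t, u t <= v) -> Defs.cesaro u N <= v.
Proof.
move=> uv; rewrite /Defs.cesaro ler_pdivrMr ?ltr0n //.
apply: le_trans (_ : _ <= \sum_(t < N.+1) v) _; first exact: ler_sum.
by rewrite sumr_const card_ord mulr_natr.
Qed.

Lemma cesaro_ge0 (R : realType) (u : nat -> R) N :
  (forall t, 0 <= u t) -> 0 <= Defs.cesaro u N.
Proof. by move=> u0; rewrite /Defs.cesaro divr_ge0 ?ler0n ?sumr_ge0. Qed.

Lemma cesaro_sum (R : realType) n (p : 'I_n -> R) (f : 'I_n -> nat -> R) N :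
  Defs.cesaro (fun t => \sum_(e < n) p e * f e t) N =
  \sum_(e < n) p e * Defs.cesaro (f e) N.
Proof.
rewrite /Defs.cesaro; under [RHS]eq_bigr do rewrite mulrA; rewrite -mulr_suml.
by congr (_ / _); rewrite exchange_big; apply: eq_bigr => t _; rewrite mulr_sumr.
Qed.

Section Objectives.
Variables (R : realType) (n m : nat) (p : 'I_n -> R) (s : 'I_m -> {set 'I_n}).
Hypothesis hp : forall e, 0 <= p e.
Variable K : Defs.kernel R m.
Hypothesis hK : valid s K.
Local Notation TK e t := (fine (Tdet s K e t)).

Lemma TdetE_fine e t : Tdet s K e t = (TK e t)%:E.
Proof. by rewrite fineK ?Tdet_fin_num. Qed.

Lemma cvg_cesaro_Tdet e : Defs.cesaro (fun t => TK e t) @ \oo --> Et s K e.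
Proof. by have [_ _ cvgE _] := hK; exact: cvgE. Qed.

Lemma MEP_le_EMP : (MEP p s K <= EMP p s K)%E.
Proof.
apply: ge_ereal_sup => _ [t _ <-]; apply: lee_sum => e _.
by apply: lee_wpmul2l; [rewrite lee_fin | exact: Tdet_le_Mt].
Qed.

Lemma EEP_le_MEP : (EEP p s K <= MEP p s K)%E.
Proof.
have MEP_ge t : ((\sum_(e < n) p e * TK e t)%:E <= MEP p s K)%E.
  apply: ereal_sup_ubound; exists t => //=.
  by rewrite -sumEFin; apply: eq_bigr => e _; rewrite TdetE_fine.
case MEPE : (MEP p s K) => [v||]; last 2 first.
- by rewrite leey.
- by move: (MEP_ge 0%N); rewrite MEPE.
have cvg_avg : Defs.cesaro (fun t => \sum_(e < n) p e * TK e t) @ \oo -->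
    \sum_(e < n) p e * Et s K e.
  have -> : Defs.cesaro (fun t => \sum_(e < n) p e * TK e t) =
      fun N => \sum_(e < n) p e * Defs.cesaro (fun t => TK e t) N.
    by apply/funext => N; rewrite (cesaro_sum p (fun e t => TK e t)).
  apply: cvg_big => [|e _]; first exact: add_continuous.
  by apply: cvgMl_tmp; exact: cvg_cesaro_Tdet.
rewrite /EEP lee_fin -(cvg_lim _ cvg_avg) //; apply: limr_le; first exact: cvgP cvg_avg.
by apply: nearW => N; apply: cesaro_le => t; rewrite -lee_fin -MEPE.
Qed.

Lemma bigmaxe_Tdet t : (\big[maxe/0%E]_(e < n) ((p e)%:E * Tdet s K e t))%E =
  (\big[Num.max/0]_(e < n) (p e * TK e t))%:E.
Proof. by rewrite -EFin_bigmax; apply: eq_bigr => e _; rewrite TdetE_fine. Qed.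

Lemma MWP_le_WMP : (0 < n)%N -> (MWP p s K <= WMP p s K)%E.
Proof.
move=> n_gt0; pose e0 := Ordinal n_gt0.
have WMP_ge e t : ((p e * TK e t)%:E <= WMP p s K)%E.
  by apply: ereal_sup_ubound; exists (e, t) => //=; rewrite TdetE_fine.
case WMPE : (WMP p s K) => [v||]; last 2 first.
- by rewrite leey.
- by move: (WMP_ge e0 0%N); rewrite WMPE.
have v_ge e t : p e * TK e t <= v by rewrite -lee_fin -WMPE.
have v_ge0 : 0 <= v.
  apply: le_trans (v_ge e0 0%N); rewrite mulr_ge0 //; apply: fine_ge0.
  by apply: Tdet_ge0; case: hK.
rewrite /MWP limn_esup_lim; apply: lime_le; first exact: is_cvg_esups.
apply: nearW => N; apply: ge_ereal_sup => _ [k _ <-]; rewrite lee_fin.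
by apply: cesaro_le => t; rewrite bigmaxe_Tdet /=; apply: bigmax_le.
Qed.

Lemma WEP_le_MWP : (WEP p s K <= MWP p s K)%E.
Proof.
pose u N := (Defs.cesaro (fun t => \big[Num.max/0]_(e < n) (p e * TK e t)) N)%:E.
have -> : MWP p s K = limn (esups u).
  rewrite /MWP limn_esup_lim; congr (limn (esups _)); apply/funext => N.
  by congr (_%:E); congr Defs.cesaro; apply/funext => t; rewrite bigmaxe_Tdet.
have u_le_esups N : (u N <= esups u N)%E by apply: ereal_sup_ubound; exists N => /=.
rewrite /WEP -EFin_bigmax; apply: bigmax_le.
  apply: lime_ge; first exact: is_cvg_esups.
  apply: nearW => N; apply: le_trans (u_le_esups N).
  by rewrite lee_fin; apply: cesaro_ge0 => t; apply: bigmax_ge_id.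
move=> e _.
have cvg_e : (fun N => (p e * Defs.cesaro (fun t => TK e t) N)%:E) @ \oo -->
    (p e * Et s K e)%:E.
  apply: cvg_EFin; first exact: nearW.
  by apply: cvgMl_tmp; exact: cvg_cesaro_Tdet.
rewrite -(cvg_lim _ cvg_e) //; apply: lee_lim; [exact: cvgP cvg_e | exact: is_cvg_esups |].
apply: nearW => N; apply: le_trans (u_le_esups N).
rewrite lee_fin /Defs.cesaro mulrA; apply: ler_wpM2r; first by rewrite invr_ge0 ler0n.
rewrite mulr_sumr; apply: ler_sum => t _.
exact: le_bigmax (fun e => p e * TK e t) e.
Qed.

End Objectives.

Section Infima.
Variables (R : realType) (n m : nat) (s : 'I_m -> {set 'I_n}).
Implicit Types F G : Defs.kernel R m -> \bar R.

Lemma inf_obj_le F G :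
  (forall K, valid s K -> (F K <= G K)%E) -> (inf_obj s F <= inf_obj s G)%E.
Proof.
move=> FG; apply: le_ereal_inf_tmp => _ [K hK <-].
by apply: le_trans (FG K hK); apply: ereal_inf_lbound; exists K.
Qed.

Lemma inf_obj_le_approx F G (c : R) : 0 <= c ->
  (forall K, valid s K -> forall eps, 0 < eps ->
     exists2 K', valid s K' & (F K' <= G K + (eps * c)%:E)%E) ->
  (inf_obj s F <= inf_obj s G)%E.
Proof.
move=> c_ge0 FG; apply: le_ereal_inf_tmp => _ [K hK <-].
apply/lee_addgt0Pr => eps eps_gt0.
have c1_gt0 : 0 < c + 1 by lra.
have [K' hK' FK'] := FG K hK _ (divr_gt0 eps_gt0 c1_gt0).
apply: le_trans (_ : F K' <= _)%E; first by apply: ereal_inf_lbound; exists K'.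
apply: le_trans FK' _; apply: leeD => //; rewrite lee_fin.
by rewrite mulrAC ler_pdivrMr //; nra.
Qed.

Variables (p : 'I_n -> R) (hp : forall e, 0 <= p e).

Lemma Mt_le K e (b : R) : (forall t, (Tdet s K e t <= b%:E)%E) -> (Mt s K e <= b%:E)%E.
Proof. by move=> Tb; apply: ge_ereal_sup => _ [t _ <-]. Qed.

Lemma EMP_le_EEP_approx K eps : valid s K -> 0 < eps ->
  exists2 K', valid s K' & (EMP p s K' <= EEP p s K + (eps * \sum_(e < n) p e)%:E)%E.
Proof.
move=> hK eps_gt0; have [K' [hK' TK']] := stationary_approximation hK eps_gt0.
exists K' => //; rewrite /EMP /EEP -EFinD mulr_sumr -big_split /= -sumEFin.
apply: lee_sum => e _; rewrite (mulrC eps) -mulrDr EFinM.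
by apply: lee_wpmul2l; [rewrite lee_fin | apply: Mt_le].
Qed.

Lemma WMP_le_WEP_approx K eps : valid s K -> 0 < eps ->
  exists2 K', valid s K' & (WMP p s K' <= WEP p s K + (eps * \sum_(e < n) p e)%:E)%E.
Proof.
move=> hK eps_gt0; have [K' [hK' TK']] := stationary_approximation hK eps_gt0.
exists K' => //; apply: ge_ereal_sup => _ [[e t] _ <-] /=.
apply: le_trans (_ : (p e)%:E * (Et s K e + eps)%:E <= _)%E.
  by apply: lee_wpmul2l; [rewrite lee_fin | exact: TK'].
rewrite /WEP -EFinD -EFinM lee_fin mulrDr; apply: lerD.
  exact: le_bigmax (fun e => p e * Et s K e) e.
rewrite mulrC; apply: ler_wpM2l; first exact: ltW.
by rewrite (bigD1 e) //= lerDl; apply: sumr_ge0.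
Qed.

End Infima.

Theorem lemma2 (R : realType) (n m : nat) (hn : (0 < n)%N)
  (p : 'I_n -> R) (hp : forall e, 0 <= p e) (s : 'I_m -> {set 'I_n}) :
  [/\ inf_obj s (EMP p s) = inf_obj s (MEP p s),
      inf_obj s (MEP p s) = inf_obj s (EEP p s),
      inf_obj s (WMP p s) = inf_obj s (MWP p s)
    & inf_obj s (MWP p s) = inf_obj s (WEP p s)].
Proof.
have p_sum_ge0 : 0 <= \sum_(e < n) p e by apply: sumr_ge0.
have EMP_EEP : (inf_obj s (EMP p s) <= inf_obj s (EEP p s))%E.
  by apply: (inf_obj_le_approx p_sum_ge0) => K hK eps; apply: EMP_le_EEP_approx.
have EEP_MEP : (inf_obj s (EEP p s) <= inf_obj s (MEP p s))%E.
  by apply: inf_obj_le => K hK; apply: EEP_le_MEP.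
have MEP_EMP : (inf_obj s (MEP p s) <= inf_obj s (EMP p s))%E.
  by apply: inf_obj_le => K hK; apply: MEP_le_EMP.
have WMP_WEP : (inf_obj s (WMP p s) <= inf_obj s (WEP p s))%E.
  by apply: (inf_obj_le_approx p_sum_ge0) => K hK eps; apply: WMP_le_WEP_approx.
have WEP_MWP : (inf_obj s (WEP p s) <= inf_obj s (MWP p s))%E.
  by apply: inf_obj_le => K hK; apply: WEP_le_MWP.
have MWP_WMP : (inf_obj s (MWP p s) <= inf_obj s (WMP p s))%E.
  by apply: inf_obj_le => K hK; apply: MWP_le_WMP.
split; apply/eqP; rewrite eq_le.
- by rewrite MEP_EMP (le_trans EMP_EEP EEP_MEP).
- by rewrite EEP_MEP (le_trans MEP_EMP EMP_EEP).
- by rewrite MWP_WMP (le_trans WMP_WEP WEP_MWP).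
- by rewrite WEP_MWP (le_trans MWP_WMP WMP_WEP).
Qed.
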